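(* Let $\mathbf p\in\mathbb{Z}^2\setminus\{\mathbf0\}$ and $\mathbf a\in\mathbb{Z}^2$ with $|\mathbf a|<|\mathbf p|$ and $|\mathbf a+k\mathbf p|>|\mathbf p|$ for all $k\in\mathbb{Z}\setminus\{0\}$, and set $\rho_k=\frac1{|\mathbf p|^2}-\frac1{|\mathbf a+k\mathbf p|^2}$ for $k\in\mathbb{Z}$. Suppose that $\sqrt{-\rho_1(\rho_0+\rho_2)}$ or $\sqrt{-\rho_{-1}(\rho_0+\rho_{-2})}$ is a positive real number. Then the infinite matrix $M=(M_{j,k})_{j,k\in\mathbb{Z}}$ with $M_{j,j+1}=\rho_{j+1}$, $M_{j,j-1}=-\rho_{j-1}$ and all other entries zero has a positive real eigenvalue $\lambda$, and an associated eigenvector lies in $\ell^2(\mathbb{Z})$; that is, there exist $\lambda>0$ and a nonzero real sequence $\mathbf v=(v_k)_{k\in\mathbb{Z}}\in\ell^2(\mathbb{Z})$ with $\lambda v_k=\rho_{k+1}v_{k+1}-\rho_{k-1}v_{k-1}$ for all $k\in\mathbb{Z}$.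
   Context: $M$ is (up to a scalar factor) the linearisation of the 2D Euler equations on the torus, written in Fourier coefficients $\omega_{\mathbf a+k\mathbf p}$, about the equilibrium with Fourier coefficients nonzero only at $\pm\mathbf p$, restricted to the invariant subspace of modes $\{\mathbf a+k\mathbf p:k\in\mathbb{Z}\}$. *)

From Stdlib Require Import Reals ZArith.
From Coquelicot Require Import Coquelicot.
Open Scope R_scope.

Definition sqnorm (x : Z * Z) : R := IZR (fst x) ^ 2 + IZR (snd x) ^ 2.

Definition affk (a p : Z * Z) (k : Z) : Z * Z :=
  (fst a + k * fst p, snd a + k * snd p)%Z.

Definition rho (a p : Z * Z) (k : Z) : R :=
  / sqnorm p - / sqnorm (affk a p k).

(* v in l^2(Z): sum over k in Z of v_k^2 is finite
   (indexing Z by n >= 0 and -n-1 for n >= 0). *)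
Definition in_l2Z (v : Z -> R) : Prop :=
  ex_series (fun n : nat => v (Z.of_nat n) ^ 2 + v (- Z.of_nat n - 1)%Z ^ 2).

From Stdlib Require Import Reals ZArith Lra Lia Psatz Ranalysis5.
From Coquelicot Require Import Coquelicot.
Open Scope R_scope.

(* With u_k = rho_k v_k the eigenvalue equation reads
   u_(k+1) - u_(k-1) = (lambda / rho_k) u_k.  For k <> 0 the coefficients
   t_k = lambda / rho_k are bounded below by some tau > 0, so on each side of 0
   the continued fraction Q_n = 1 / (t_n + Q_(n+1)) converges, and
   u_(n+1) = - Q_n u_n (to the right), u_(-n-1) = Q_n u_(-n) (to the left)
   solve the recurrence away from 0.  Since Q_n Q_(n+1) <= 1 / (1 + tau^2)
   these solutions decay geometrically, hence lie in l^2.  They glue at k = 0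
   iff Q^+_0(lambda) + Q^-_0(lambda) + lambda / rho_0 = 0.  This function of
   lambda is continuous, positive for small lambda (this is where rho_0 < 0 and
   the hypothesis on rho_(+-1), rho_(+-2) enter) and negative for large lambda,
   so the intermediate value theorem provides the eigenvalue. *)

Fixpoint cf_trunc (t : nat -> R) (m n : nat) : R :=
  match m with O => 0 | S m' => / (t n + cf_trunc t m' (S n)) end.

Definition cf (t : nat -> R) (n : nat) : R := real (Lim_seq (fun m => cf_trunc t m n)).

Definition is_cf_tail (t Q : nat -> R) : Prop :=
  forall n, 0 < Q n /\ Q n * (t n + Q (S n)) = 1.

Definition cf_rate (tau : R) : R := / (1 + tau ^ 2).

Lemma cf_rate_bounds tau : 0 < tau -> 0 < cf_rate tau < 1.
Proof.
  intros Ht. unfold cf_rate. split; [apply Rinv_0_lt_compat; nra|].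
  rewrite <- Rinv_1. apply Rinv_lt_contravar; nra.
Qed.

Lemma cf_step2_contraction a b x y tau : 0 < tau -> tau <= a -> tau <= b ->
  0 <= x -> 0 <= y ->
  Rabs (/ (a + / (b + x)) - / (a + / (b + y))) <= cf_rate tau * Rabs (x - y).
Proof.
  intros Ht Ha Hb Hx Hy.
  assert (E : / (a + / (b + x)) - / (a + / (b + y)) =
     (x - y) * / ((a * (b + x) + 1) * (a * (b + y) + 1))).
  { field. repeat split; try nra.
    all: assert (0 < / (b + x)) by (apply Rinv_0_lt_compat; lra).
    all: assert (0 < / (b + y)) by (apply Rinv_0_lt_compat; lra); nra. }
  rewrite E, Rabs_mult, (Rmult_comm (cf_rate tau)).
  apply Rmult_le_compat_l; [apply Rabs_pos|].
  assert (0 < a * (b + x) + 1) by nra. assert (0 < a * (b + y) + 1) by nra.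
  rewrite Rabs_right by (left; apply Rinv_0_lt_compat, Rmult_lt_0_compat; lra).
  unfold cf_rate; apply Rinv_le_contravar; [nra|].
  assert (tau ^ 2 <= a * b) by nra.
  assert (1 + tau ^ 2 <= a * (b + x) + 1) by nra.
  assert (1 <= a * (b + y) + 1) by nra.
  nra.
Qed.

Section ContinuedFraction.

Variables (t : nat -> R) (tau : R).
Hypotheses (tau_pos : 0 < tau) (t_ge : forall n, tau <= t n).

Lemma cf_trunc_bounds m n : 0 <= cf_trunc t m n <= / tau.
Proof.
  revert n; induction m as [|m IH]; intros n; simpl.
  - split; [lra|]. left; apply Rinv_0_lt_compat; lra.
  - destruct (IH (S n)). specialize (t_ge n). split.
    + left; apply Rinv_0_lt_compat; lra.
    + apply Rinv_le_contravar; lra.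
Qed.

Lemma cf_trunc_close j m m' n : (2 * j <= m)%nat -> (2 * j <= m')%nat ->
  Rabs (cf_trunc t m n - cf_trunc t m' n) <= cf_rate tau ^ j * / tau.
Proof.
  revert m m' n; induction j as [|j IH]; intros m m' n Hm Hm'.
  - rewrite pow_O, Rmult_1_l.
    destruct (cf_trunc_bounds m n), (cf_trunc_bounds m' n).
    apply Rabs_le; lra.
  - destruct m as [|[|m]]; [lia|lia|]. destruct m' as [|[|m']]; [lia|lia|].
    simpl cf_trunc.
    eapply Rle_trans;
      [apply cf_step2_contraction with (tau := tau); auto; apply cf_trunc_bounds|].
    rewrite <- tech_pow_Rmult, Rmult_assoc.
    apply Rmult_le_compat_l; [left; apply cf_rate_bounds; lra|].
    apply IH; lia.
Qed.

Lemma ex_finite_lim_cf_trunc n : ex_finite_lim_seq (fun m => cf_trunc t m n).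
Proof.
  apply ex_lim_seq_cauchy_corr. intros eps.
  destruct (cf_rate_bounds tau tau_pos) as [Hk0 Hk1].
  destruct (pow_lt_1_zero (cf_rate tau) ltac:(rewrite Rabs_right; lra) (eps * tau))
    as [N HN]; [destruct eps; simpl; nra|].
  exists (2 * N)%nat. intros m m' Hm Hm'.
  eapply Rle_lt_trans; [apply (cf_trunc_close N); lia|].
  specialize (HN N (le_n _)). rewrite Rabs_right in HN by (left; apply pow_lt; lra).
  apply Rmult_lt_reg_r with tau; auto.
  rewrite Rmult_assoc, Rinv_l; lra.
Qed.

Lemma is_lim_cf_trunc n : is_lim_seq (fun m => cf_trunc t m n) (cf t n).
Proof.
  destruct (ex_finite_lim_cf_trunc n) as [l Hl].
  unfold cf. rewrite (is_lim_seq_unique _ _ Hl). exact Hl.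
Qed.

Lemma is_cf_tail_cf : is_cf_tail t (cf t).
Proof.
  intros n.
  set (u m := cf_trunc t (S m) n * (t n + cf_trunc t m (S n))).
  assert (Hlim : is_lim_seq u (cf t n * (t n + cf t (S n)))).
  { apply is_lim_seq_mult'.
    - apply (is_lim_seq_incr_1 (fun m => cf_trunc t m n)), is_lim_cf_trunc.
    - apply is_lim_seq_plus'; [apply is_lim_seq_const|apply is_lim_cf_trunc]. }
  assert (Hone : is_lim_seq u 1).
  { apply is_lim_seq_ext with (fun _ => 1); [|apply is_lim_seq_const].
    intros m. unfold u. simpl. rewrite Rinv_l; auto.
    destruct (cf_trunc_bounds m (S n)). specialize (t_ge n). lra. }
  assert (E : cf t n * (t n + cf t (S n)) = 1).
  { apply Rbar_finite_eq. rewrite <- (is_lim_seq_unique _ _ Hlim).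
    exact (is_lim_seq_unique _ _ Hone). }
  split; auto.
  assert (Hge : Rbar_le 0 (cf t n)).
  { apply (is_lim_seq_le (fun _ => 0) (fun m => cf_trunc t m n));
      [intros m; apply cf_trunc_bounds|apply is_lim_seq_const|apply is_lim_cf_trunc]. }
  simpl in Hge. destruct Hge as [|H]; auto. rewrite <- H in E. lra.
Qed.

End ContinuedFraction.

Section CfTail.

Variables (t Q : nat -> R) (tau : R).
Hypotheses (tau_pos : 0 < tau) (t_ge : forall n, tau <= t n) (HQ : is_cf_tail t Q).

Lemma is_cf_tail_le n : Q n <= / tau.
Proof.
  destruct (HQ n) as [H1 H2], (HQ (S n)) as [H3 _]. specialize (t_ge n).
  apply Rmult_le_reg_r with tau; auto. rewrite Rinv_l by lra. nra.
Qed.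

Lemma is_cf_tail_mul_succ_le n : Q n * Q (S n) <= cf_rate tau.
Proof.
  destruct (HQ n) as [H1 H2], (HQ (S n)) as [H3 H4], (HQ (S (S n))) as [H5 _].
  pose proof (t_ge n). pose proof (t_ge (S n)).
  unfold cf_rate. apply Rmult_le_reg_r with (1 + tau ^ 2); [nra|].
  rewrite Rinv_l by nra.
  assert (Q (S n) * t (S n) <= 1) by nra.
  assert (Q n * t n <= 1) by nra.
  assert (Q n * Q (S n) * (t n * t (S n)) <= Q n * t n).
  { replace (Q n * Q (S n) * (t n * t (S n))) with ((Q n * t n) * (Q (S n) * t (S n)))
      by ring.
    rewrite <- (Rmult_1_r (Q n * t n)) at 2. apply Rmult_le_compat_l; nra. }
  assert (Q n * Q (S n) * tau ^ 2 <= Q n * Q (S n) * (t n * t (S n)))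
    by (apply Rmult_le_compat_l; nra).
  nra.
Qed.

End CfTail.

Lemma le_of_two_step_contraction (d : nat -> R) K k D : 0 <= K -> 0 <= k < 1 ->
  (forall n, d n <= D) -> (forall n, d n <= K + k * d (S (S n))) ->
  forall n, d n <= K / (1 - k).
Proof.
  intros HK Hk HD Hd n.
  assert (Iter : forall j n, d n <= K / (1 - k) + k ^ j * D).
  { assert (0 <= K / (1 - k)) by (apply Rdiv_le_0_compat; lra).
    intros j; induction j as [|j IH]; intros m.
    - specialize (HD m). simpl. lra.
    - eapply Rle_trans; [apply Hd|].
      replace (K / (1 - k)) with (K + k * (K / (1 - k))) by (field; lra).
      rewrite <- tech_pow_Rmult. specialize (IH (S (S m))). nra. }
  assert (Hlim : is_lim_seq (fun j => K / (1 - k) + k ^ j * D) (K / (1 - k))).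
  { assert (H0 : is_lim_seq (fun j => k ^ j * D) 0).
    { pose proof (is_lim_seq_scal_r _ D _ (is_lim_seq_geom k ltac:(rewrite Rabs_right; lra)))
        as H. simpl in H. rewrite Rmult_0_l in H. exact H. }
    pose proof (is_lim_seq_plus' _ _ _ _ (is_lim_seq_const (K / (1 - k))) H0) as H.
    rewrite Rplus_0_r in H. exact H. }
  exact (is_lim_seq_le (fun _ => d n) _ (d n) _ (fun j => Iter j n)
           (is_lim_seq_const _) Hlim).
Qed.

Section TwoTails.

Variables (t t' Q Q' : nat -> R) (tau eps : R).
Hypotheses (tau_pos : 0 < tau) (t_ge : forall n, tau <= t n) (t'_ge : forall n, tau <= t' n)
  (t_close : forall n, Rabs (t n - t' n) <= eps)
  (HQ : is_cf_tail t Q) (HQ' : is_cf_tail t' Q').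

Lemma is_cf_tail_diff_le n :
  Rabs (Q n - Q' n) <= Q n * Q' n * (eps + Rabs (Q (S n) - Q' (S n))).
Proof.
  destruct (HQ n) as [A E], (HQ' n) as [A' E'].
  assert (D : Q n - Q' n = Q n * Q' n * ((t' n - t n) + (Q' (S n) - Q (S n)))).
  { transitivity (Q n * (Q' n * (t' n + Q' (S n))) - Q' n * (Q n * (t n + Q (S n))));
      [rewrite E, E'|]; ring. }
  rewrite D, Rabs_mult, (Rabs_right (Q n * Q' n)) by nra.
  apply Rmult_le_compat_l; [nra|].
  eapply Rle_trans; [apply Rabs_triang|].
  rewrite Rabs_minus_sym, (Rabs_minus_sym (Q' (S n))). specialize (t_close n). lra.
Qed.

Lemma is_cf_tail_diff_le2 n :
  Rabs (Q n - Q' n) <=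
  ((/ tau) ^ 2 + 1) * eps + cf_rate tau * Rabs (Q (S (S n)) - Q' (S (S n))).
Proof.
  pose proof (is_cf_tail_diff_le n) as D1. pose proof (is_cf_tail_diff_le (S n)) as D2.
  pose proof (is_cf_tail_le t Q tau tau_pos t_ge HQ n) as L.
  pose proof (is_cf_tail_le t' Q' tau tau_pos t'_ge HQ' n) as L'.
  pose proof (is_cf_tail_mul_succ_le t Q tau tau_pos t_ge HQ n) as P.
  pose proof (is_cf_tail_mul_succ_le t' Q' tau tau_pos t'_ge HQ' n) as P'.
  pose proof (cf_rate_bounds tau tau_pos).
  set (k := cf_rate tau) in *. set (B := / tau) in *.
  destruct (HQ n), (HQ' n), (HQ (S n)), (HQ' (S n)).
  assert (0 <= eps) by (pose proof (Rabs_pos (t O - t' O)); specialize (t_close O); lra).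
  set (d1 := Rabs (Q (S n) - Q' (S n))) in *.
  set (d2 := Rabs (Q (S (S n)) - Q' (S (S n)))) in *.
  assert (0 <= d2) by apply Rabs_pos.
  assert (Q n * Q' n <= B ^ 2) by nra.
  assert (C : Q n * Q' n * (Q (S n) * Q' (S n)) <= k).
  { replace (Q n * Q' n * (Q (S n) * Q' (S n)))
      with ((Q n * Q (S n)) * (Q' n * Q' (S n))) by ring.
    assert ((Q n * Q (S n)) * (Q' n * Q' (S n)) <= k * k)
      by (apply Rmult_le_compat; nra).
    nra. }
  assert (Q n * Q' n * d1 <= Q n * Q' n * (Q (S n) * Q' (S n) * (eps + d2)))
    by (apply Rmult_le_compat_l; nra).
  assert (Q n * Q' n * (Q (S n) * Q' (S n)) * (eps + d2) <= k * (eps + d2)) by nra.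
  nra.
Qed.

Lemma is_cf_tail_lipschitz n :
  Rabs (Q n - Q' n) <= ((/ tau) ^ 2 + 1) * eps / (1 - cf_rate tau).
Proof.
  pose proof (cf_rate_bounds tau tau_pos).
  assert (0 <= eps) by (pose proof (Rabs_pos (t O - t' O)); specialize (t_close O); lra).
  assert (0 < / tau) by (apply Rinv_0_lt_compat; lra).
  apply (le_of_two_step_contraction (fun m => Rabs (Q m - Q' m)) _ _ (2 * / tau));
    [nra|lra| |exact is_cf_tail_diff_le2].
  intros m. pose proof (is_cf_tail_le t Q tau tau_pos t_ge HQ m).
  pose proof (is_cf_tail_le t' Q' tau tau_pos t'_ge HQ' m).
  destruct (HQ m), (HQ' m). apply Rabs_le; lra.
Qed.

End TwoTails.

Lemma continuity_pt_of_local_lipschitz f x d C : 0 < d ->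
  (forall y, Rabs (y - x) < d -> Rabs (f y - f x) <= C * Rabs (y - x)) ->
  continuity_pt f x.
Proof.
  intros Hd H eps Heps. simpl. unfold R_dist.
  assert (HC : 0 < Rabs C + 1) by (pose proof (Rabs_pos C); lra).
  exists (Rmin d (eps / (Rabs C + 1))).
  split; [apply Rmin_pos; auto; apply Rdiv_lt_0_compat; auto|].
  intros y [_ Hy].
  assert (H1 : Rabs (y - x) < d) by (eapply Rlt_le_trans; [exact Hy|apply Rmin_l]).
  assert (H2 : Rabs (y - x) * (Rabs C + 1) < eps).
  { apply Rlt_div_r; [lra|]. eapply Rlt_le_trans; [exact Hy|apply Rmin_r]. }
  eapply Rle_lt_trans; [apply H; auto|].
  pose proof (Rabs_pos (y - x)). pose proof (Rle_abs C). nra.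
Qed.

Definition cfq (r : nat -> R) (l : R) : nat -> R := cf (fun n => l / r n).

Section ScaledTail.

Variables (r : nat -> R) (lo hi : R).
Hypotheses (lo_pos : 0 < lo) (r_bounds : forall n, lo <= r n <= hi).

Lemma scaled_tail_ge l n : 0 <= l -> l / hi <= l / r n.
Proof.
  intros Hl. specialize (r_bounds n).
  apply Rmult_le_compat_l; auto. apply Rinv_le_contravar; lra.
Qed.

Lemma is_cf_tail_cfq l : 0 < l -> is_cf_tail (fun n => l / r n) (cfq r l).
Proof.
  intros Hl. apply is_cf_tail_cf with (l / hi).
  - pose proof (r_bounds O). apply Rdiv_lt_0_compat; lra.
  - intros n. apply scaled_tail_ge. lra.
Qed.

Lemma continuity_pt_cfq x : 0 < x -> continuity_pt (fun l => cfq r l O) x.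
Proof.
  intros Hx. pose proof (r_bounds O) as Hhi0.
  set (tau := (x / 2) / hi).
  assert (Ht : 0 < tau) by (apply Rdiv_lt_0_compat; lra).
  assert (Hge : forall y n, x / 2 <= y -> tau <= y / r n).
  { intros y n Hy. eapply Rle_trans; [|apply scaled_tail_ge; lra].
    apply Rmult_le_compat_r; [left; apply Rinv_0_lt_compat; lra|exact Hy]. }
  apply continuity_pt_of_local_lipschitz with (x / 2)
    (((/ tau) ^ 2 + 1) / lo / (1 - cf_rate tau)); [lra|].
  intros y Hy. apply Rabs_def2 in Hy.
  eapply Rle_trans.
  { apply (is_cf_tail_lipschitz (fun n => y / r n) (fun n => x / r n) _ _ tau
             (Rabs (y - x) / lo)); auto.
    - intros n. apply Hge. lra.
    - intros n. apply Hge. lra.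
    - intros n. specialize (r_bounds n).
      replace (y / r n - x / r n) with ((y - x) * / r n) by (field; lra).
      rewrite Rabs_mult, (Rabs_right (/ r n)) by (left; apply Rinv_0_lt_compat; lra).
      apply Rmult_le_compat_l; [apply Rabs_pos|]. apply Rinv_le_contravar; lra.
    - apply is_cf_tail_cfq. lra.
    - apply is_cf_tail_cfq. lra. }
  right. field. pose proof (cf_rate_bounds tau Ht). lra.
Qed.

End ScaledTail.

Lemma is_cf_tail_scaled_head_lb r Q l r0 : is_cf_tail (fun n => l / r n) Q ->
  0 < r O -> 0 < r 1%nat -> 0 < l -> r0 < 0 ->
  l ^ 2 <= - r O * (r0 + r 1%nat) -> - (l / r0) <= Q O.
Proof.
  intros HQ H0 H1 Hl Hr Hc.
  destruct (HQ O) as [A0 E0], (HQ 1%nat) as [A1 E1], (HQ 2%nat) as [A2 _].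
  assert (G1 : Q 1%nat * l <= r 1%nat).
  { assert (F1 : Q 1%nat * l = r 1%nat * (1 - Q 1%nat * Q 2%nat))
      by (rewrite <- E1; field; lra).
    rewrite F1. assert (0 < r 1%nat * (Q 1%nat * Q 2%nat)) by (apply Rmult_lt_0_compat; nra).
    lra. }
  assert (F0 : Q O * (l + r O * Q 1%nat) = r O).
  { transitivity (r O * (Q O * (l / r O + Q 1%nat))); [field; lra|rewrite E0; ring]. }
  assert (K : l <= - r0 * Q O).
  { apply Rmult_le_reg_r with (l + r O * Q 1%nat); [nra|].
    replace (- r0 * Q O * (l + r O * Q 1%nat)) with (- r0 * (Q O * (l + r O * Q 1%nat)))
      by ring.
    rewrite F0. nra. }
  replace (- (l / r0)) with (l / (- r0)) by (field; lra).
  apply Rle_div_l; lra.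
Qed.

Lemma is_cf_tail_scaled_head_ub r Q l : is_cf_tail (fun n => l / r n) Q ->
  0 < r O -> 0 < l -> Q O <= r O / l.
Proof.
  intros HQ H0 Hl. destruct (HQ O) as [A0 E0], (HQ 1%nat) as [A1 _].
  assert (F0 : Q O * l = r O * (1 - Q O * Q 1%nat)) by (rewrite <- E0; field; lra).
  apply Rle_div_r; [lra|].
  assert (0 < r O * (Q O * Q 1%nat)) by (apply Rmult_lt_0_compat; nra). lra.
Qed.

Fixpoint sprod (c : R) (Q : nat -> R) (n : nat) : R :=
  match n with O => 1 | S m => c * Q m * sprod c Q m end.

Section SignedProduct.

Variables (c : R) (t Q : nat -> R).
Hypotheses (c_sq : c * c = 1) (HQ : is_cf_tail t Q).

Lemma sprod_rec n : t n * sprod c Q (S n) = c * (sprod c Q n - sprod c Q (S (S n))).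
Proof.
  destruct (HQ n) as [_ E]. simpl.
  replace (c * Q (S n) * (c * Q n * sprod c Q n))
    with ((c * c) * (Q (S n) * Q n * sprod c Q n)) by ring.
  rewrite c_sq.
  transitivity (c * sprod c Q n * (Q n * (t n + Q (S n))) - c * (Q (S n) * Q n * sprod c Q n));
    [ring|rewrite E; ring].
Qed.

Lemma sprod_sq_decay tau n : 0 < tau -> (forall n, tau <= t n) ->
  sprod c Q (S (S n)) ^ 2 <= cf_rate tau * sprod c Q n ^ 2.
Proof.
  intros Ht Hb.
  pose proof (is_cf_tail_mul_succ_le t Q tau Ht Hb HQ n) as P.
  destruct (HQ n) as [A _], (HQ (S n)) as [B _].
  replace (sprod c Q (S (S n)) ^ 2)
    with ((c * c) ^ 2 * (Q n * Q (S n)) ^ 2 * sprod c Q n ^ 2) by (simpl; ring).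
  rewrite c_sq.
  assert (0 < Q n * Q (S n)) by (apply Rmult_lt_0_compat; auto).
  assert ((Q n * Q (S n)) ^ 2 <= cf_rate tau) by (pose proof (cf_rate_bounds tau Ht); nra).
  pose proof (pow2_ge_0 (sprod c Q n)). nra.
Qed.

End SignedProduct.

Lemma ex_series_two_step_contraction (w : nat -> R) k : (forall n, 0 <= w n) -> 0 <= k < 1 ->
  (forall n, w (S (S n)) <= k * w n) -> ex_series w.
Proof.
  intros Hw Hk H.
  set (mu := (1 + k) / 2).
  assert (Hmu : 0 < mu < 1) by (unfold mu; lra).
  set (C := w O + w 1%nat / mu).
  assert (HC : forall n, w n <= C * mu ^ n /\ w (S n) <= C * mu ^ (S n)).
  { induction n as [|n [IH1 IH2]].
    - pose proof (Hw O). pose proof (Hw 1%nat).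
      assert (0 <= w 1%nat / mu) by (apply Rdiv_le_0_compat; lra).
      unfold C. simpl. split; [lra|].
      replace ((w O + w 1%nat / mu) * (mu * 1)) with (w O * mu + w 1%nat) by (field; lra).
      nra.
    - split; auto. eapply Rle_trans; [apply H|].
      assert (k <= mu * mu) by (unfold mu; nra).
      assert (0 <= C * mu ^ n) by (eapply Rle_trans; [apply Hw|apply IH1]).
      simpl. nra. }
  apply (ex_series_le w (fun n => C * mu ^ n)).
  - intros n. change (norm (w n)) with (Rabs (w n)).
    rewrite Rabs_right by (apply Rle_ge, Hw). apply HC.
  - apply (ex_series_scal_l C (fun n => mu ^ n)), ex_series_geom.
    rewrite Rabs_right; lra.
Qed.

Lemma ex_series_sprod_sq c t Q tau : c * c = 1 -> 0 < tau -> (forall n, tau <= t n) ->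
  is_cf_tail t Q -> ex_series (fun n => sprod c Q n ^ 2).
Proof.
  intros Hc Ht Hb HQ.
  apply ex_series_two_step_contraction with (cf_rate tau).
  - intros n. apply pow2_ge_0.
  - pose proof (cf_rate_bounds tau Ht). lra.
  - intros n. apply (sprod_sq_decay c t Q Hc HQ tau n Ht Hb).
Qed.

Lemma ex_series_sprod_cfq_sq c r lo hi l : c * c = 1 -> 0 < lo ->
  (forall n, lo <= r n <= hi) -> 0 < l -> ex_series (fun n => sprod c (cfq r l) n ^ 2).
Proof.
  intros Hc Hlo Hr Hl.
  assert (Hhi : 0 < l / hi) by (pose proof (Hr O); apply Rdiv_lt_0_compat; lra).
  apply (ex_series_sprod_sq c (fun n => l / r n) _ (l / hi) Hc Hhi).
  - intros n. apply (scaled_tail_ge r lo hi Hlo Hr). lra.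
  - exact (is_cf_tail_cfq r lo hi Hlo Hr l Hl).
Qed.

Lemma cfq_sum_pos_near0 (rr rl : nat -> R) lo hi r0 : 0 < lo ->
  (forall n, lo <= rr n <= hi) -> (forall n, lo <= rl n <= hi) -> r0 < 0 ->
  - rr O * (r0 + rr 1%nat) > 0 ->
  exists l, 0 < l /\ cfq rr l O + cfq rl l O + l / r0 > 0.
Proof.
  intros Hlo Hrr Hrl Hr0 HD.
  set (D := - rr O * (r0 + rr 1%nat)) in *.
  set (l := Rmin 1 D).
  assert (Hl : 0 < l) by (apply Rmin_pos; lra).
  assert (Hl2 : l ^ 2 <= D).
  { assert (l <= 1) by apply Rmin_l. assert (l <= D) by apply Rmin_r. nra. }
  exists l. split; auto.
  pose proof (Hrr O). pose proof (Hrr 1%nat).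
  assert (- (l / r0) <= cfq rr l O)
    by (apply (is_cf_tail_scaled_head_lb rr _ l r0 (is_cf_tail_cfq rr lo hi Hlo Hrr l Hl));
        [lra..|exact Hl2]).
  destruct (is_cf_tail_cfq rl lo hi Hlo Hrl l Hl O).
  lra.
Qed.

Definition right_tail (r : Z -> R) (n : nat) : R := r (Z.of_nat (S n)).
Definition left_tail (r : Z -> R) (n : nat) : R := r (- Z.of_nat n - 1)%Z.

(* Q^+_0 + Q^-_0 + lambda / rho_0 of the header. *)
Definition matching (r : Z -> R) (l : R) : R :=
  cfq (right_tail r) l O + cfq (left_tail r) l O + l / r 0%Z.

(* The solution u of the header, normalised by u_0 = 1. *)
Definition profile (r : Z -> R) (l : R) (k : Z) : R :=
  if (0 <=? k)%Z then sprod (-1) (cfq (right_tail r) l) (Z.to_nat k)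
  else sprod 1 (cfq (left_tail r) l) (Z.to_nat (- k)).

Lemma profile_of_nat r l n : profile r l (Z.of_nat n) = sprod (-1) (cfq (right_tail r) l) n.
Proof.
  unfold profile. replace (0 <=? Z.of_nat n)%Z with true by (symmetry; apply Z.leb_le; lia).
  rewrite Nat2Z.id. reflexivity.
Qed.

Lemma profile_opp_of_nat r l n : profile r l (- Z.of_nat n) = sprod 1 (cfq (left_tail r) l) n.
Proof.
  destruct n as [|n]; [reflexivity|].
  unfold profile.
  replace (0 <=? - Z.of_nat (S n))%Z with false by (symmetry; apply Z.leb_gt; lia).
  f_equal. lia.
Qed.

Section TwoSidedTails.

Variables (r : Z -> R) (lo hi : R).
Hypotheses (lo_pos : 0 < lo) (r_bounds : forall k, k <> 0%Z -> lo <= r k <= hi)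
  (r0_neg : r 0%Z < 0).

Lemma right_tail_bounds n : lo <= right_tail r n <= hi.
Proof. apply r_bounds. lia. Qed.

Lemma left_tail_bounds n : lo <= left_tail r n <= hi.
Proof. apply r_bounds. lia. Qed.

Lemma r_neq0 k : r k <> 0.
Proof.
  destruct (Z.eq_dec k 0) as [->|Hk]; [lra|]. specialize (r_bounds k Hk). lra.
Qed.

Lemma matching_pos_near0 :
  - r 1%Z * (r 0%Z + r 2%Z) > 0 \/ - r (-1)%Z * (r 0%Z + r (-2)%Z) > 0 ->
  exists l, 0 < l /\ matching r l > 0.
Proof.
  unfold matching. intros [H|H].
  - apply (cfq_sum_pos_near0 _ _ lo hi); auto using right_tail_bounds, left_tail_bounds.
  - destruct (cfq_sum_pos_near0 (left_tail r) (right_tail r) lo hi (r 0%Z))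
      as [l [Hl HF]]; auto using right_tail_bounds, left_tail_bounds.
    exists l. split; [exact Hl|lra].
Qed.

Lemma matching_neg_large l0 : 0 < l0 -> exists l1, l0 < l1 /\ matching r l1 < 0.
Proof.
  intros Hl0.
  set (X := right_tail r O + left_tail r O).
  pose proof (right_tail_bounds O). pose proof (left_tail_bounds O).
  set (l1 := 1 + l0 + - r 0%Z * X).
  assert (Hl1 : l0 < l1) by (unfold l1, X; nra).
  exists l1. split; [exact Hl1|].
  pose proof (is_cf_tail_scaled_head_ub _ _ l1
    (is_cf_tail_cfq _ lo hi lo_pos right_tail_bounds l1 ltac:(lra)) ltac:(lra) ltac:(lra)).
  pose proof (is_cf_tail_scaled_head_ub _ _ l1
    (is_cf_tail_cfq _ lo hi lo_pos left_tail_bounds l1 ltac:(lra)) ltac:(lra) ltac:(lra)).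
  assert (E : right_tail r O / l1 + left_tail r O / l1 + l1 / r 0%Z =
              (X * - r 0%Z - l1 * l1) * / (l1 * - r 0%Z)) by (unfold X; field; lra).
  assert (X * - r 0%Z - l1 * l1 < 0) by (unfold l1 in *; nra).
  assert (0 < / (l1 * - r 0%Z)) by (apply Rinv_0_lt_compat; nra).
  unfold matching. nra.
Qed.

Lemma continuity_pt_matching x : 0 < x -> continuity_pt (matching r) x.
Proof.
  intros Hx.
  apply (continuity_pt_plus
    (fun l => cfq (right_tail r) l O + cfq (left_tail r) l O) (fun l => l / r 0%Z)).
  - apply continuity_pt_plus.
    + exact (continuity_pt_cfq _ lo hi lo_pos right_tail_bounds x Hx).
    + exact (continuity_pt_cfq _ lo hi lo_pos left_tail_bounds x Hx).
  - apply (continuity_pt_div (fun l => l) (fun _ => r 0%Z)); [apply continuity_pt_id| |lra].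
    apply continuity_pt_const. intros ? ?. reflexivity.
Qed.

Lemma matching_root :
  - r 1%Z * (r 0%Z + r 2%Z) > 0 \/ - r (-1)%Z * (r 0%Z + r (-2)%Z) > 0 ->
  exists z, 0 < z /\ matching r z = 0.
Proof.
  intros Hc.
  destruct (matching_pos_near0 Hc) as [l0 [Hl0 H0]].
  destruct (matching_neg_large l0 Hl0) as [l1 [Hl1 H1]].
  destruct (IVT_interv (- matching r)%F l0 l1) as [z [Hz Ez]]; auto.
  - intros x Hx. apply continuity_pt_opp, continuity_pt_matching. lra.
  - unfold opp_fct. lra.
  - unfold opp_fct. lra.
  - exists z. split; [lra|]. unfold opp_fct in Ez. lra.
Qed.

Lemma profile_rec l : 0 < l -> matching r l = 0 ->
  forall k, profile r l (k + 1) - profile r l (k - 1) = l / r k * profile r l k.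
Proof.
  intros Hl HF k.
  destruct (Z_lt_le_dec k 0) as [Hk|Hk].
  - pose (m := Z.to_nat (- k - 1)).
    assert (Ek : k = (- Z.of_nat m - 1)%Z) by (unfold m; lia). clearbody m. subst k.
    replace (- Z.of_nat m - 1 + 1)%Z with (- Z.of_nat m)%Z by lia.
    replace (- Z.of_nat m - 1 - 1)%Z with (- Z.of_nat (S (S m)))%Z by lia.
    replace (profile r l (- Z.of_nat m - 1)) with (profile r l (- Z.of_nat (S m)))
      by (f_equal; lia).
    rewrite !profile_opp_of_nat.
    pose proof (sprod_rec 1 _ _ ltac:(ring)
      (is_cf_tail_cfq _ lo hi lo_pos left_tail_bounds l Hl) m) as E.
    change (r (- Z.of_nat m - 1)%Z) with (left_tail r m). lra.
  - pose (m := Z.to_nat k).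
    assert (Ek : k = Z.of_nat m) by (unfold m; lia). clearbody m. subst k.
    destruct m as [|m].
    + change (Z.of_nat 0 + 1)%Z with (Z.of_nat 1).
      change (Z.of_nat 0 - 1)%Z with (- Z.of_nat 1)%Z.
      rewrite !profile_of_nat, profile_opp_of_nat.
      unfold matching in HF. simpl. lra.
    + replace (Z.of_nat (S m) + 1)%Z with (Z.of_nat (S (S m))) by lia.
      replace (Z.of_nat (S m) - 1)%Z with (Z.of_nat m) by lia.
      rewrite !profile_of_nat.
      pose proof (sprod_rec (-1) _ _ ltac:(ring)
        (is_cf_tail_cfq _ lo hi lo_pos right_tail_bounds l Hl) m) as E.
      change (r (Z.of_nat (S m))) with (right_tail r m). lra.
Qed.

Lemma in_l2Z_profile l : 0 < l -> in_l2Z (fun k => profile r l k / r k).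
Proof.
  intros Hl. unfold in_l2Z.
  set (M := (/ lo) ^ 2 + (/ r 0%Z) ^ 2).
  assert (HM : forall k, (/ r k) ^ 2 <= M).
  { intros k. unfold M. destruct (Z.eq_dec k 0) as [->|Hk].
    - pose proof (pow2_ge_0 (/ lo)). lra.
    - specialize (r_bounds k Hk).
      assert (/ r k <= / lo) by (apply Rinv_le_contravar; lra).
      assert (0 < / r k) by (apply Rinv_0_lt_compat; lra).
      pose proof (pow2_ge_0 (/ r 0%Z)). nra. }
  set (UR := sprod (-1) (cfq (right_tail r) l)).
  set (UL := sprod 1 (cfq (left_tail r) l)).
  assert (Hser : ex_series (fun n => M * (UR n ^ 2 + UL (S n) ^ 2))).
  { apply (ex_series_scal_l M (fun n => UR n ^ 2 + UL (S n) ^ 2)).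
    apply (ex_series_plus (fun n => UR n ^ 2) (fun n => UL (S n) ^ 2)).
    - exact (ex_series_sprod_cfq_sq (-1) _ lo hi l ltac:(ring) lo_pos right_tail_bounds Hl).
    - apply (ex_series_incr_1 (fun n => UL n ^ 2)).
      exact (ex_series_sprod_cfq_sq 1 _ lo hi l ltac:(ring) lo_pos left_tail_bounds Hl). }
  apply (@ex_series_le R_AbsRing R_CompleteNormedModule _
           (fun n => M * (UR n ^ 2 + UL (S n) ^ 2))); [intros n|exact Hser].
  change (norm ?x) with (Rabs x).
  replace (- Z.of_nat n - 1)%Z with (- Z.of_nat (S n))%Z by lia.
  rewrite profile_of_nat, profile_opp_of_nat. fold UR UL.
  rewrite Rabs_right by (apply Rle_ge, Rplus_le_le_0_compat; apply pow2_ge_0).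
  unfold Rdiv. rewrite !Rpow_mult_distr.
  pose proof (HM (Z.of_nat n)). pose proof (HM (- Z.of_nat (S n))%Z).
  pose proof (pow2_ge_0 (UR n)). pose proof (pow2_ge_0 (UL (S n))).
  nra.
Qed.

Theorem exists_pos_eigenvector :
  - r 1%Z * (r 0%Z + r 2%Z) > 0 \/ - r (-1)%Z * (r 0%Z + r (-2)%Z) > 0 ->
  exists (lambda : R) (v : Z -> R),
    lambda > 0 /\ (exists k : Z, v k <> 0) /\ in_l2Z v /\
    forall k : Z, lambda * v k = r (k + 1)%Z * v (k + 1)%Z - r (k - 1)%Z * v (k - 1)%Z.
Proof.
  intros Hc. destruct (matching_root Hc) as [z [Hz HF]].
  exists z, (fun k => profile r z k / r k).
  split; [lra|]. split; [|split; [apply in_l2Z_profile; exact Hz|]].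
  - exists 0%Z. change (profile r z 0%Z) with 1.
    unfold Rdiv. rewrite Rmult_1_l. apply Rinv_neq_0_compat, r_neq0.
  - intros k. pose proof (profile_rec z Hz HF k) as E.
    pose proof (r_neq0 k). pose proof (r_neq0 (k + 1)). pose proof (r_neq0 (k - 1)).
    replace (r (k + 1)%Z * (profile r z (k + 1) / r (k + 1)%Z)) with (profile r z (k + 1))
      by (field; auto).
    replace (r (k - 1)%Z * (profile r z (k - 1) / r (k - 1)%Z)) with (profile r z (k - 1))
      by (field; auto).
    rewrite E. field. auto.
Qed.

End TwoSidedTails.

Lemma sqnorm_IZR x : sqnorm x = IZR (fst x * fst x + snd x * snd x).
Proof. unfold sqnorm. rewrite plus_IZR, !mult_IZR. ring. Qed.

Lemma sqnorm_pos x : x <> (0%Z, 0%Z) -> 0 < sqnorm x.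
Proof.
  intros Hx. rewrite sqnorm_IZR. apply IZR_lt.
  destruct x as [x1 x2]; simpl.
  destruct (Z.eq_dec x1 0), (Z.eq_dec x2 0); [subst; congruence|nia..].
Qed.

Lemma sqnorm_lt_le_succ x y : sqnorm x < sqnorm y -> sqnorm x + 1 <= sqnorm y.
Proof.
  rewrite !sqnorm_IZR. intros H. apply lt_IZR in H.
  rewrite <- plus_IZR. apply IZR_le. lia.
Qed.

Lemma rho_bounds a p k : p <> (0%Z, 0%Z) -> sqnorm p < sqnorm (affk a p k) ->
  / sqnorm p - / (sqnorm p + 1) <= rho a p k <= / sqnorm p.
Proof.
  intros Hp Hk. pose proof (sqnorm_pos p Hp). pose proof (sqnorm_lt_le_succ _ _ Hk).
  unfold rho. split.
  - assert (/ sqnorm (affk a p k) <= / (sqnorm p + 1)) by (apply Rinv_le_contravar; lra).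
    lra.
  - assert (0 < / sqnorm (affk a p k)) by (apply Rinv_0_lt_compat; lra). lra.
Qed.

Lemma rho_origin_unit p k : (k = 1 \/ k = -1)%Z -> rho (0%Z, 0%Z) p k = 0.
Proof.
  intros Hk. unfold rho. replace (sqnorm (affk (0%Z, 0%Z) p k)) with (sqnorm p); [ring|].
  rewrite !sqnorm_IZR. f_equal. destruct p. unfold affk. simpl.
  destruct Hk as [-> | ->]; ring.
Qed.

Lemma rho0_neg a p : a <> (0%Z, 0%Z) -> sqnorm a < sqnorm p -> rho a p 0 < 0.
Proof.
  intros Ha Hap. pose proof (sqnorm_pos a Ha). unfold rho.
  replace (affk a p 0) with a by (destruct a; unfold affk; simpl; f_equal; ring).
  assert (/ sqnorm p < / sqnorm a) by (apply Rinv_lt_contravar; nra). lra.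
Qed.

Theorem lemma5 (p a : (Z * Z)%type) :
  p <> (0%Z, 0%Z) ->
  sqnorm a < sqnorm p ->
  (forall k : Z, k <> 0%Z -> sqnorm (affk a p k) > sqnorm p) ->
  (- rho a p 1%Z * (rho a p 0%Z + rho a p 2%Z) > 0 \/
   - rho a p (-1)%Z * (rho a p 0%Z + rho a p (-2)%Z) > 0) ->
  exists (lambda : R) (v : Z -> R),
    lambda > 0 /\ (exists k : Z, v k <> 0) /\ in_l2Z v /\
    forall k : Z,
      lambda * v k = rho a p (k + 1)%Z * v (k + 1)%Z - rho a p (k - 1)%Z * v (k - 1)%Z.
Proof.
  intros Hp Hap Hk Hc.
  assert (Ha : a <> (0%Z, 0%Z)).
  { intros ->. rewrite (rho_origin_unit p 1), (rho_origin_unit p (-1)) in Hc by auto.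
    destruct Hc; lra. }
  apply (exists_pos_eigenvector (rho a p) (/ sqnorm p - / (sqnorm p + 1)) (/ sqnorm p)).
  - pose proof (sqnorm_pos p Hp).
    assert (/ (sqnorm p + 1) < / sqnorm p) by (apply Rinv_lt_contravar; nra). lra.
  - intros k Hk0. apply rho_bounds; [exact Hp|apply Hk, Hk0].
  - apply rho0_neg; auto.
  - exact Hc.
Qed.
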